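(* For every mixed graph $G$ without directed cycles, $\mathrm{cw}_{\mathrm m}(G)\le\mathrm{nd}_{\mathrm m}(G)+1$. Further, $\mathrm{cw}_{\mathrm m}$ does not bound $\mathrm{nd}_{\mathrm m}$.
   Context: A mixed graph $G$ consists of a finite vertex set $V(G)$, a set $E(G)$ of undirected edges and a set $A(G)$ of directed arcs; it is simple and contains no directed cycle. $N^+(v)$, $N^-(v)$, $N^{\mathrm u}(v)$ denote out-, in- and undirected neighbors. Vertices $u,v$ have the same mixed type if $N^{\mathrm u}(u)\setminus\{v\}=N^{\mathrm u}(v)\setminus\{u\}$, $N^-(u)=N^-(v)$, $N^+(u)=N^+(v)$; $\mathrm{nd}_{\mathrm m}(G)$ is the number of mixed types. The mixed cliquewidth $\mathrm{cw}_{\mathrm m}(G)$ is the minimum number of labels needed to construct $G$ using: create a new vertex with label $i$; disjoint union; $\eta_{i,j}$ ($i\ne j$): add an edge between every vertex labeled $i$ and every vertex labeled $j$; $\alpha_{i,j}$ ($i\ne j$): add an arc from every vertex labeled $i$ to every vertex labeled $j$; $\rho_{i\to j}$: rename label $i$ to $j$. A parameter $\alpha$ bounds $\beta$ if there is a computable $f$ with $\beta(G)\le f(\alpha(G))$ for all $G$ (here: all mixed graphs without directed cycles). *)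

From Stdlib Require Import ClassicalEpsilon.
From mathcomp Require Import all_boot.
Set Implicit Arguments. Unset Strict Implicit. Unset Printing Implicit Defensive.

Record mgraph (n : nat) := MGraph { medge : rel 'I_n; marc : rel 'I_n }.

Definition mixed_graph n (G : mgraph n) : Prop :=
  [/\ irreflexive (medge G), symmetric (medge G),
      (forall u v, ~~ (medge G u v && marc G u v)),
      (forall u v, marc G u v -> ~~ marc G v u) &
      irreflexive (marc G)] /\
  (forall u v, marc G u v -> ~~ connect (marc G) v u).

Definition same_mtype n (G : mgraph n) (u v : 'I_n) : bool :=
  [&& [forall w, ((w != u) && (w != v)) ==> (medge G u w == medge G v w)],
      [forall w, marc G w u == marc G w v] &
      [forall w, marc G u w == marc G v w]].

Definition ndm n (G : mgraph n) : nat :=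
  #|[set [set v | same_mtype G u v] | u : 'I_n]|.

Inductive cwexp :=
| CVert of nat
| CUnion of cwexp & cwexp
| CEta of nat & nat & cwexp
| CAlpha of nat & nat & cwexp
| CRen of nat & nat & cwexp.

(* Semantics: the vertices of t are 0 .. nv t - 1 (leaves, left to right). *)
Fixpoint nv (t : cwexp) : nat :=
  match t with
  | CVert _ => 1
  | CUnion a b => nv a + nv b
  | CEta _ _ a | CAlpha _ _ a | CRen _ _ a => nv a
  end.

Fixpoint lab (t : cwexp) (v : nat) : nat :=
  match t with
  | CVert i => i
  | CUnion a b => if v < nv a then lab a v else lab b (v - nv a)
  | CEta _ _ a | CAlpha _ _ a => lab a v
  | CRen i j a => if lab a v == i then j else lab a v
  end.

Fixpoint edg (t : cwexp) (u v : nat) : bool :=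
  match t with
  | CVert _ => false
  | CUnion a b =>
      if (u < nv a) && (v < nv a) then edg a u v
      else if (nv a <= u) && (nv a <= v) then edg b (u - nv a) (v - nv a)
      else false
  | CEta i j a =>
      [|| edg a u v, (lab a u == i) && (lab a v == j)
                   | (lab a u == j) && (lab a v == i)]
  | CAlpha _ _ a | CRen _ _ a => edg a u v
  end.

Fixpoint arcs (t : cwexp) (u v : nat) : bool :=
  match t with
  | CVert _ => false
  | CUnion a b =>
      if (u < nv a) && (v < nv a) then arcs a u v
      else if (nv a <= u) && (nv a <= v) then arcs b (u - nv a) (v - nv a)
      else false
  | CAlpha i j a => arcs a u v || ((lab a u == i) && (lab a v == j))
  | CEta _ _ a | CRen _ _ a => arcs a u v
  end.

Fixpoint kexp (k : nat) (t : cwexp) : bool :=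
  match t with
  | CVert i => i < k
  | CUnion a b => kexp k a && kexp k b
  | CEta i j a | CAlpha i j a => [&& i < k, j < k, i != j & kexp k a]
  | CRen i j a => [&& i < k, j < k & kexp k a]
  end.

Definition constructs n (G : mgraph n) (t : cwexp) : Prop :=
  nv t = n /\
  exists f : 'I_n -> 'I_n, injective f /\
    forall u v, medge G u v = edg t (f u) (f v) /\ marc G u v = arcs t (f u) (f v).

Definition cw_le n (G : mgraph n) (k : nat) : Prop :=
  exists t, kexp k t /\ constructs G t.

(* cw_m(G): the least k such that G has a k-expression
   (chosen by epsilon; well defined whenever G has some expression,
    i.e. whenever G is nonempty). *)
Definition cwm n (G : mgraph n) : nat :=
  epsilon (inhabits 0%N)
    (fun k => cw_le G k /\ forall k', cw_le G k' -> k <= k').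

From mathcomp Require Import all_boot.
From Stdlib Require Import Classical ClassicalEpsilon.
From Stdlib Require Wf_nat.
Set Implicit Arguments. Unset Strict Implicit. Unset Printing Implicit Defensive.

(* Number the vertices 0, 1, ... and colour them with k colours.  Adding the
   vertices one at a time, the new vertex v gets the spare label k, is joined
   by eta/alpha operations to whole colour classes of the earlier vertices, and
   is then renamed to its own colour.  This is correct as soon as every colour
   class looks the same from each later vertex; colouring by mixed type has
   this property, so nd_m(G) + 1 labels suffice.  In the transitive tournament
   on n vertices all mixed types differ, yet the single-colour colouring has
   the property, so cw_m <= 2 while nd_m = n. *)

Lemma has_pred_single (T : eqType) (P : pred T) (s : seq T) c :
  c \in s -> (forall j, P j -> j = c) -> has P s = P c.
Proof.
move=> cs Pc; apply/hasP/idP => [[j _ Pj]|]; first by rewrite -(Pc j Pj).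
by exists c.
Qed.

Section LinearExpression.

Variables (k : nat) (E A : rel nat) (C : nat -> nat).

Definition colored_nbr (R : pred nat) v j :=
  has (fun w => (C w == j) && R w) (iota 0 v).

Lemma colored_nbrE (R : pred nat) v y :
  y < v -> (forall w, w < v -> C w = C y -> R w = R y) ->
  colored_nbr R v (C y) = R y.
Proof.
move=> yv Rhom; apply/hasP/idP => [[w]|Ry].
  by rewrite mem_iota => /andP[_ wv] /andP[/eqP /(Rhom w wv) <-].
by exists y; rewrite ?mem_iota ?eqxx.
Qed.

Definition connect_color v j t :=
  let t1 := if colored_nbr (E v) v j then CEta k j t else t in
  let t2 := if colored_nbr (A^~ v) v j then CAlpha j k t1 else t1 in
  if colored_nbr (A v) v j then CAlpha k j t2 else t2.

Definition connect_colors v l t := foldr (connect_color v) t l.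

Lemma nv_connect_colors v l t : nv (connect_colors v l t) = nv t.
Proof.
elim: l => [|j l IH] //=; rewrite /connect_color.
by case: colored_nbr; case: colored_nbr; case: colored_nbr.
Qed.

Lemma lab_connect_colors v l t x : lab (connect_colors v l t) x = lab t x.
Proof.
elim: l => [|j l IH] //=; rewrite /connect_color.
by case: colored_nbr; case: colored_nbr; case: colored_nbr.
Qed.

Lemma edg_connect_colors v l t x y :
  edg (connect_colors v l t) x y =
  edg t x y || has (fun j => colored_nbr (E v) v j &&
    ((lab t x == k) && (lab t y == j) || (lab t y == k) && (lab t x == j))) l.
Proof.
elim: l => [|j l IH] /=; first by rewrite orbF.
rewrite /connect_color; case: colored_nbr; case: colored_nbr; case: colored_nbr;
  rewrite /= ?lab_connect_colors IH;
  by case: (lab t x == k); case: (lab t y == j); case: (lab t x == j);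
     case: (lab t y == k); rewrite /= ?andbF ?andbT ?orbT ?orbF ?orbA.
Qed.

Lemma arcs_connect_colors v l t x y :
  arcs (connect_colors v l t) x y =
  arcs t x y || has (fun j =>
    colored_nbr (A^~ v) v j && (lab t y == k) && (lab t x == j) ||
    colored_nbr (A v) v j && (lab t x == k) && (lab t y == j)) l.
Proof.
elim: l => [|j l IH] /=; first by rewrite orbF.
rewrite /connect_color; case: colored_nbr; case: colored_nbr; case: colored_nbr;
  rewrite /= ?lab_connect_colors IH;
  by case: (lab t x == k); case: (lab t y == j); case: (lab t x == j);
     case: (lab t y == k); rewrite /= ?andbF ?andbT ?orbT ?orbF ?orbA.
Qed.

Lemma kexp_connect_colors v l t :
  kexp k.+1 t -> all (fun j => j < k) l -> kexp k.+1 (connect_colors v l t).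
Proof.
move=> kt; elim: l => [|j l IH] //= /andP[jk lk]; rewrite /connect_color.
have jk1 : j < k.+1 by apply: ltnW.
have kj : k != j by rewrite eq_sym ltn_eqF.
by case: colored_nbr; case: colored_nbr; case: colored_nbr;
  rewrite /= ?jk1 ?kj ?ltnSn ?(eq_sym j k) ?kj ?IH.
Qed.

Definition add_vertex v t :=
  CRen k (C v) (connect_colors v (iota 0 k) (CUnion t (CVert k))).

Fixpoint linear_exp m :=
  if m is m'.+1 then add_vertex m (linear_exp m') else CVert (C 0).

Definition realizes m t :=
  [/\ nv t = m, kexp k.+1 t, (forall x, x < m -> lab t x = C x) &
      forall x y, x < m -> y < m -> edg t x y = E x y /\ arcs t x y = A x y].

Hypotheses (C_lt : forall x, C x < k) (E_sym : symmetric E)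
           (E_irr : irreflexive E) (A_irr : irreflexive A).

Lemma realizes_vertex : realizes 1 (CVert (C 0)).
Proof.
split=> //= [|x|x y]; first exact: ltnW (C_lt 0).
  by rewrite ltnS leqn0 => /eqP->.
by rewrite !ltnS !leqn0 => /eqP-> /eqP->; rewrite E_irr A_irr.
Qed.

Section AddVertex.

Variables (v : nat) (t : cwexp).
Hypothesis Chom : forall x y, x < v -> y < v -> C x = C y ->
  [/\ E v x = E v y, A x v = A y v & A v x = A v y].
Hypothesis t_realizes : realizes v t.

Lemma edg_arcs_add_vertex x y : x < v.+1 -> y < v.+1 ->
  edg (add_vertex v t) x y = E x y /\ arcs (add_vertex v t) x y = A x y.
Proof.
have [tv _ labt edgt] := t_realizes; set u := CUnion t (CVert k).
have labu z : z < v.+1 -> lab u z = if z < v then C z else k.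
  by rewrite /= tv ltnS; case: ifP => // zv _; rewrite labt.
have Cnk z : (C z == k) = false by rewrite ltn_eqF.
have Ck z : C z \in iota 0 k by rewrite mem_iota add0n C_lt.
have nbrE z : z < v -> colored_nbr (E v) v (C z) = E z v.
  by move=> zv; rewrite E_sym colored_nbrE // => w wv /(Chom wv zv) [].
have nbrA1 z : z < v -> colored_nbr (A^~ v) v (C z) = A z v.
  by move=> zv; rewrite colored_nbrE // => w wv /(Chom wv zv) [].
have nbrA2 z : z < v -> colored_nbr (A v) v (C z) = A v z.
  by move=> zv; rewrite colored_nbrE // => w wv /(Chom wv zv) [].
move=> xv yv; rewrite /= edg_connect_colors arcs_connect_colors !labu //.
move: xv yv; rewrite !ltnS (leq_eqVlt x) (leq_eqVlt y).
case/orP=> [/eqP->|xv]; case/orP=> [/eqP->|yv].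
- rewrite /= tv ltnn leqnn /= eqxx E_irr A_irr.
  by split; apply/negbTE/hasPn => j; rewrite mem_iota add0n => /andP[_ jk];
    rewrite (gtn_eqF jk) !andbF.
- rewrite /= tv ltnn yv /= if_same eqxx Cnk /= !(has_pred_single (Ck y)).
    by rewrite !eqxx ?andbF ?andbT ?orbF nbrE // nbrA2 // E_sym.
  1,2: by move=> j; rewrite ?andbF ?andbT ?orbF /= => /andP[_ /eqP].
- rewrite /= tv ltnn xv /= if_same eqxx Cnk /= !(has_pred_single (Ck x)).
    by rewrite !eqxx ?andbF ?andbT ?orbF nbrE // nbrA1.
  1,2: by move=> j; rewrite ?andbF ?andFb ?andbT ?orbF /= => /andP[_ /eqP].
- have [<- <-] := edgt x y xv yv.
  rewrite /= tv xv yv /= !Cnk /=.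
  by split; apply/orb_idr => /hasP[j _]; rewrite !andbF.
Qed.

Lemma realizes_add_vertex : realizes v.+1 (add_vertex v t).
Proof.
have [tv kt labt _] := t_realizes.
split; last exact: edg_arcs_add_vertex.
- by rewrite /= nv_connect_colors /= tv addn1.
- have Cv : C v < k.+1 := ltnW (C_lt v).
  rewrite /add_vertex /= ltnSn Cv /=.
  apply: kexp_connect_colors; first by rewrite /= kt ltnSn.
  by apply/allP => j; rewrite mem_iota.
move=> x xv; rewrite /= lab_connect_colors /= tv.
case: ltnP => [xv'|vx]; first by rewrite labt // ltn_eqF.
by rewrite eqxx; congr C; apply/eqP; rewrite eqn_leq vx -ltnS xv.
Qed.

End AddVertex.

Lemma realizes_linear_exp n :
  (forall z x y, z < n -> x < z -> y < z -> C x = C y ->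
     [/\ E z x = E z y, A x z = A y z & A z x = A z y]) ->
  forall m, m < n -> realizes m.+1 (linear_exp m).
Proof.
move=> Chom; elim=> [|m IH] mn; first exact: realizes_vertex.
apply: realizes_add_vertex (IH (ltnW mn)) => x y; exact: Chom.
Qed.

End LinearExpression.

Lemma cw_le_of_coloring n (G : mgraph n.+1) k (C : 'I_n.+1 -> nat) :
  (forall x, C x < k) ->
  symmetric (medge G) -> irreflexive (medge G) -> irreflexive (marc G) ->
  (forall x y z : 'I_n.+1, x < z -> y < z -> C x = C y ->
     [/\ medge G z x = medge G z y, marc G x z = marc G y z
       & marc G z x = marc G z y]) ->
  cw_le G k.+1.
Proof.
move=> C_lt Esym Eirr Airr Chom.
pose E x y := medge G (inord x) (inord y).
pose A x y := marc G (inord x) (inord y).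
have [] := @realizes_linear_exp k E A (C \o inord) (fun _ => C_lt _)
  (fun _ _ => Esym _ _) (fun _ => Eirr _) (fun _ => Airr _) n.+1 _ n (ltnSn n).
- move=> z x y zn xz yz; rewrite /E /A /=.
  have [xn yn] := (ltn_trans xz zn, ltn_trans yz zn).
  by apply: Chom; rewrite !inordK.
move=> nt kt _ edgt; exists (linear_exp k E A (C \o inord) n); split=> //.
split=> //; exists id; split=> // u v.
by have [-> ->] := edgt u v (ltn_ord u) (ltn_ord v); rewrite /E /A !inord_val.
Qed.

Lemma cwm_le n (G : mgraph n) k : cw_le G k -> cwm G <= k.
Proof.
move=> Gk; have [m [[Gm m_min] _]] :=
  Wf_nat.dec_inh_nat_subset_has_unique_least_element (cw_le G)
    (fun _ => classic _) (ex_intro _ k Gk).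
pose least k := cw_le G k /\ forall k', cw_le G k' -> k <= k'.
have m_least : least m by split=> // k' /m_min /leP.
by have [_] := epsilon_spec (inhabits 0) least (ex_intro _ m m_least); apply.
Qed.

Lemma same_mtype_refl n (G : mgraph n) : reflexive (same_mtype G).
Proof. by move=> u; apply/and3P; split; apply/forallP => w; rewrite eqxx ?implybT. Qed.

Lemma cwm_le_ndm n (G : mgraph n) : 0 < n -> mixed_graph G -> cwm G <= ndm G + 1.
Proof.
case: n G => [|n] G // _ [[Eirr Esym _ _ Airr] _].
pose type u := [set v | same_mtype G u v].
pose types := [set type u | u : 'I_n.+1].
have type_in u : type u \in enum types by rewrite mem_enum imset_f.
rewrite addn1; apply/cwm_le.
apply: (@cw_le_of_coloring _ _ _ (fun u => index (type u) (enum types))) => //.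
  by move=> u; rewrite /ndm cardE index_mem.
move=> x y z xz yz /(congr1 (nth (type x) (enum types))); rewrite !nth_index //.
move=> same_type; have : y \in type x by rewrite same_type inE same_mtype_refl.
rewrite inE => /and3P[/forallP Ez /forallP Ain /forallP Aout].
have [zx zy] : z != x /\ z != y by rewrite !neq_ltn xz yz !orbT.
move: (Ez z) (Ain z) (Aout z); rewrite zx zy /= => /eqP e1 /eqP e2 /eqP e3.
by split; rewrite // Esym e1 Esym.
Qed.

Definition transitive_tournament n : mgraph n :=
  MGraph (fun _ _ => false) (fun u v : 'I_n => u < v).

Lemma transitive_tournament_mixed n : mixed_graph (transitive_tournament n).
Proof.
split; first by split=> // [u v /ltnW|u]; rewrite /= ?ltnn // leqNgt.
have lt_trans : transitive (marc (transitive_tournament n)).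
  by move=> ? ? ? /=; apply: ltn_trans.
move=> u v /= uv; apply/negP => /connectP[p /(order_path_min lt_trans) vp uE].
have : u \in v :: p by rewrite uE mem_last.
rewrite inE => /predU1P[uv'|/(allP vp) /= vu]; first by rewrite uv' ltnn in uv.
by rewrite ltnNge ltnW in uv.
Qed.

Lemma ndm_transitive_tournament n : ndm (transitive_tournament n) = n.
Proof.
rewrite /ndm card_imset ?card_ord // => u v /setP /(_ v).
rewrite !inE same_mtype_refl => /and3P[_ /forallP Ain _].
have := Ain u; have := Ain v; rewrite /= !ltnn.
by case: ltngtP => // /val_inj.
Qed.

Lemma cw_le_transitive_tournament n : cw_le (transitive_tournament n.+1) 2.
Proof.
apply: (@cw_le_of_coloring _ _ 1 (fun _ => 0)) => //= [u|x y z xz yz _].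
  by rewrite ltnn.
by rewrite xz yz ltnNge (ltnW xz) ltnNge (ltnW yz).
Qed.

Theorem mainTheorem17 :
  (forall (n : nat) (G : mgraph n), 0 < n -> mixed_graph G ->
      cwm G <= ndm G + 1)
  /\
  ~ (exists f : nat -> nat,
       forall (n : nat) (G : mgraph n), mixed_graph G -> ndm G <= f (cwm G)).
Proof.
split=> [n G|[f ndm_le]]; first exact: cwm_le_ndm.
pose N := \max_(i < 3) f i; pose T := transitive_tournament N.+1.
have cwT : cwm T < 3 by apply: cwm_le (cw_le_transitive_tournament N).
have := ndm_le _ T (transitive_tournament_mixed _).
by rewrite ndm_transitive_tournament ltnNge (leq_bigmax_cond (Ordinal cwT)).
Qed.
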